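(* Let $K\in{\rm Alg}(V)$ be a cubic cyclic Galois field extension of $F$ with ${\rm Gal}(K/F)=\langle\tau\rangle$, and let $(f,g)\in{\rm Gl}(V)\times{\rm Gl}(V)$. Then there exists $(f',g')\in{\rm Gl}(V)\times{\rm Gl}(V)$ with $K^{(f,g)}\cong K^{(f',g')}$ such that $f'$ has exactly one of the following forms: (1) $f'={\rm id}+L(y_1)\tau+L(y_2)\tau^2$ with $y_1,y_2\in K^\times$ and $N(y_1)+N(y_2)-T(\tau(y_1)\tau^2(y_2))\ne-1$; (2) $f'={\rm id}+L(y_2)\tau^2$ with $y_2\in K^\times$, $N(y_2)\ne-1$; (3) $f'={\rm id}+L(y_1)\tau$ with $y_1\in K^\times$, $N(y_1)\ne-1$; (4) $f'={\rm id}$; (5) $f'=L(y_1)\tau+L(y_2)\tau^2$ with $y_1,y_2\in K^\times$, $N(y_2)\ne-N(y_1)$; (6) $f'=L(y_2)\tau^2$ with $y_2\in K^\times$; (7) $f'=L(y_1)\tau$ with $y_1\in K^\times$. Moreover, algebras $K^{(f',g')}$ and $K^{(f'',g'')}$ with $f',f''$ of different forms among (1)–(7) are never isomorphic.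
   Context: $F$ is a field, $V$ a $3$-dimensional $F$-vector space, $K\in{\rm Alg}(V)$ an $F$-algebra structure on $V$ which is a field. $N=N_{K/F}$ and $T=T_{K/F}$ are the field norm and trace. $L(x)$ is the map $y\mapsto xy$. For $f,g\in{\rm End}_F(V)$, $K^{(f,g)}$ is $V$ with product $x\cdot y=f(x)g(y)$. (For reference, the map ${\rm id}\cdot L(y_0)+L(y_1)\tau+L(y_2)\tau^2$ has determinant $N(y_0)+N(y_1)+N(y_2)-T(y_0\tau(y_1)\tau^2(y_2))$.) *)

From HB Require Import structures.
From mathcomp Require Import all_boot all_order all_algebra all_fingroup all_field.
Set Implicit Arguments. Unset Strict Implicit. Unset Printing Implicit Defensive.
Import GRing.Theory.
Local Open Scope ring_scope.

Section Defs.
Variables (F : fieldType) (L : splittingFieldType F).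

(** Gl(V): invertible F-linear endomorphisms of V = L. *)
Definition isGl (f : 'End(L)) : Prop :=
  exists h : 'End(L), (forall x, f (h x) = x) /\ (forall x, h (f x) = x).

(** K^(f,g) ≅ K^(f',g') as F-algebras: an F-linear bijection phi with
    phi (f x * g y) = f' (phi x) * g' (phi y). *)
Definition alg_iso (f g f' g' : 'End(L)) : Prop :=
  exists phi : 'End(L), isGl phi /\
    forall x y, phi (f x * g y) = f' (phi x) * g' (phi y).

Definition NK (a : L) : L := galNorm 1%VS {:L} a.
Definition TK (a : L) : L := galTrace 1%VS {:L} a.

Definition nform (tau : gal_of {:L}) (k : nat) (f : 'End(L)) : Prop :=
  match k with
  | 1 => exists y1 y2 : L, y1 != 0 /\ y2 != 0 /\
           NK y1 + NK y2 - TK (tau y1 * tau (tau y2)) != -1 /\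
           forall x, f x = x + y1 * tau x + y2 * tau (tau x)
  | 2 => exists y2 : L, y2 != 0 /\ NK y2 != -1 /\
           forall x, f x = x + y2 * tau (tau x)
  | 3 => exists y1 : L, y1 != 0 /\ NK y1 != -1 /\
           forall x, f x = x + y1 * tau x
  | 4 => forall x, f x = x
  | 5 => exists y1 y2 : L, y1 != 0 /\ y2 != 0 /\ NK y2 != - NK y1 /\
           forall x, f x = y1 * tau x + y2 * tau (tau x)
  | 6 => exists y2 : L, y2 != 0 /\ forall x, f x = y2 * tau (tau x)
  | 7 => exists y1 : L, y1 != 0 /\ forall x, f x = y1 * tau x
  | _ => False
  end.
End Defs.

From HB Require Import structures.
From mathcomp Require Import all_boot all_order all_algebra all_fingroup all_field.
From mathcomp Require Import cyclic ring zify.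
Set Implicit Arguments. Unset Strict Implicit. Unset Printing Implicit Defensive.
Import GRing.Theory.
Local Open Scope ring_scope.

(* Every F-linear endomorphism of K is uniquely x |-> a0 x + a1 tau(x) + a2 tau^2(x)
   (Dedekind independence of the Galois automorphisms plus a dimension count), and its
   matrix in these coordinates has determinant N(a0) + N(a1) + N(a2) - T(a0 tau(a1) tau^2(a2)).
   If a0 <> 0, replacing (f, g) by (L(a0)^-1 f, L(a0) g) does not change the algebra and
   normalizes a0 to 1; invertibility of f then becomes the inequality attached to each form.
   Conversely, every isomorphism K^(f,g) -> K^(f',g') is y |-> b sigma(y) with sigma in
   Gal(K/F), which multiplies each coefficient of f by a nonzero scalar; hence the set of
   nonzero coefficients, which tells the seven forms apart, is an isomorphism invariant. *)

Section Isotopes.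
Variables (F : fieldType) (L : splittingFieldType F).

Lemma twisted_mul_gal (u : 'End(L)) : u 1 != 0 ->
    (forall w c, u (w * c) * u 1 = u w * u c) ->
  exists2 r : gal_of {:L}, r \in ('Gal({:L} / 1%VS))%g & forall c, u c = u 1 * r c.
Proof.
move=> u1_neq0 uM.
pose s : 'End(L) := (amull ((u 1)^-1)%R \o u)%VF.
have sE c : s c = (u 1)^-1 * u c by rewrite comp_lfunE lfunE.
have s_mono : monoid_morphism s.
  split=> [|w c]; first by rewrite sE mulVf.
  by rewrite !sE; apply: (mulIf u1_neq0); rewrite -mulrA uM; field.
have : kAut 1 {:L} s by rewrite kAutfE; apply/kHom_monoid_morphism.
case/kAut_to_gal=> r Gr sr; exists r => // c.
by rewrite -sr ?memvf // sE mulrA mulfV // mul1r.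
Qed.


Lemma isGl_eq0 (u : 'End(L)) x : isGl u -> (u x == 0) = (x == 0).
Proof.
case=> v [_ vu]; apply/idP/idP=> /eqP ux0; apply/eqP; last by rewrite ux0 linear0.
by rewrite -(vu x) ux0 linear0.
Qed.

Lemma isGl_id : isGl (\1%VF : 'End(L)).
Proof. by exists \1%VF; split=> x; rewrite !id_lfunE. Qed.

Lemma alg_iso_gal (f g f' g' : 'End(L)) : isGl f -> isGl g -> alg_iso f g f' g' ->
  exists b d (r : gal_of {:L}), [/\ b != 0, d != 0, r \in ('Gal({:L} / 1%VS))%g
    & forall x, b * r (f x) = f' (b * r x) * d].
Proof.
move=> [fi [ffi _]] [gi [ggi _]] [u [Gl_u uM]].
(* As g is onto, u (f x * c) = f' (u x) * D c; comparing with c = 1 shows that u is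
   multiplicative up to the factor u 1, hence a multiple of a Galois automorphism. *)
pose D c := g' (u (gi c)); pose d := D 1.
have uf_mul x c : u (f x * c) = f' (u x) * D c by rewrite -{1}(ggi c) uM.
have uf x : u (f x) = f' (u x) * d by rewrite -uf_mul mulr1.
have u1_neq0 : u 1 != 0 by rewrite isGl_eq0 ?oner_eq0.
have d_neq0 : d != 0.
  by apply: contraNneq u1_neq0 => d0; rewrite -(ffi 1) uf d0 mulr0.
have uD w c : u (w * c) * d = u w * D c by rewrite -(ffi w) uf_mul uf mulrAC.
have uM1 w c : u (w * c) * u 1 = u w * u c.
  have uc : u c * d = u 1 * D c by rewrite -uD mul1r.
  by apply: (mulIf d_neq0); rewrite mulrAC uD -[RHS]mulrA uc; ring.
have [r Gr uE] := twisted_mul_gal u1_neq0 uM1.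
by exists (u 1), d, r; split=> // x; rewrite -!uE uf.
Qed.

Lemma isGl_amull_comp (f : 'End(L)) c : c != 0 -> isGl f -> isGl (amull c \o f)%VF.
Proof.
move=> c_neq0 [h [fh hf]]; exists (h \o amull c^-1%R)%VF.
by split=> x; rewrite !comp_lfunE !lfunE /= ?fh ?mulVKf ?mulKf ?hf.
Qed.

Lemma alg_iso_amull (f g : 'End(L)) c : c != 0 ->
  alg_iso f g (amull c^-1%R \o f)%VF (amull c \o g)%VF.
Proof.
move=> c_neq0; exists \1%VF; split=> [|x y]; first exact: isGl_id.
by rewrite !id_lfunE !comp_lfunE !lfunE /= mulrACA mulVf ?mul1r.
Qed.

Lemma alg_iso_refl (f g : 'End(L)) : alg_iso f g f g.
Proof.
by exists \1%VF; split=> [|x y]; rewrite ?id_lfunE //; exact: isGl_id.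
Qed.

End Isotopes.

Section CyclicCubic.
Variables (F : fieldType) (L : splittingFieldType F).
Hypotheses (dimL : \dim {:L} = 3%N) (galL : galois 1%VS {:L}).
Variable tau : gal_of {:L}.
Hypothesis Gal_tau : ('Gal({:L} / 1%VS) = <[tau]>)%g.

Lemma order_tau : #[tau]%g = 3%N.
Proof. by rewrite /order -Gal_tau -galois_dim // dimL dimv1 divn1. Qed.

Lemma tau3K x : tau (tau (tau x)) = x.
Proof.
have : (tau ^+ 3)%g x = x by rewrite -order_tau expg_order gal_id.
by rewrite !expgS expg0 mulg1 !galM ?memvf.
Qed.

Lemma mem_Gal_tau y : (y \in 'Gal({:L} / 1%VS))%g = (y \in [:: 1; tau; tau * tau]%g).
Proof. by rewrite Gal_tau cycle_traject order_tau /= mulg1. Qed.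

Lemma tau_neq1 : tau != 1%g.
Proof. by apply/eqP=> tau1; have := order_tau; rewrite tau1 order1. Qed.

Lemma tau2_neq1 : (tau * tau != 1)%g.
Proof.
by apply/eqP=> tau2; move: (order_dvdn tau 2); rewrite order_tau expgS expg1 tau2 eqxx.
Qed.

Lemma tau2_neq_tau : (tau * tau != tau)%g.
Proof. by rewrite -[X in _ != X](mulg1 tau) (inj_eq (mulgI tau)) tau_neq1. Qed.

Lemma uniq_Gal_tau : uniq [:: 1; tau; tau * tau]%g.
Proof.
rewrite /= !inE !negb_or !(eq_sym _ (tau * tau)%g) !(eq_sym 1%g).
by rewrite tau_neq1 tau2_neq1 tau2_neq_tau.
Qed.

Lemma big_Gal_tau (R : Type) (idx : R) (op : Monoid.com_law idx) (G : gal_of {:L} -> R) :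
  \big[op/idx]_(y in 'Gal({:L} / 1%VS)%g) G y = op (G 1%g) (op (G tau) (G (tau * tau)%g)).
Proof.
rewrite (eq_bigl _ _ mem_Gal_tau) -big_uniq ?uniq_Gal_tau //.
by rewrite !big_cons big_nil Monoid.mulm1.
Qed.

Lemma NK_tau a : NK a = a * tau a * tau (tau a).
Proof.
rewrite /NK /galNorm (big_Gal_tau ( *%R%R : Monoid.com_law (1 : L))) /= gal_id galM ?memvf //.
by rewrite mulrA.
Qed.

Lemma TK_tau a : TK a = a + tau a + tau (tau a).
Proof.
rewrite /TK /galTrace (big_Gal_tau (+%R%R : Monoid.com_law (0 : L))) /= gal_id galM ?memvf //.
by rewrite addrA.
Qed.

Definition tau_comb (a0 a1 a2 : L) : 'End(L) :=
  (amull a0 + (amull a1 \o tau) + (amull a2 \o (tau \o tau)))%VF.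

Lemma tau_combE a0 a1 a2 x : tau_comb a0 a1 a2 x = a0 * x + a1 * tau x + a2 * tau (tau x).
Proof. by rewrite !add_lfunE !comp_lfunE !lfunE. Qed.

Lemma tau_comb_eq0 c0 c1 c2 : tau_comb c0 c1 c2 = 0 -> [/\ c0 = 0, c1 = 0 & c2 = 0].
Proof.
move=> c0E; pose c_ y := if y == 1%g then c0 else if y == tau then c1 else c2.
have c_E : [/\ c_ 1%g = c0, c_ tau = c1 & c_ (tau * tau)%g = c2].
  by rewrite /c_ (negPf tau_neq1) (negPf tau2_neq1) (negPf tau2_neq_tau) !eqxx.
have c_0 y : y \in [:: 1; tau; tau * tau]%g -> c_ y = 0.
  rewrite -mem_Gal_tau; apply: gal_independent => a _.
  rewrite (big_Gal_tau (+%R%R : Monoid.com_law (0 : L))) /=.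
  case: c_E => -> -> ->; rewrite gal_id galM ?memvf // addrA.
  by rewrite -tau_combE c0E zero_lfunE.
by case: c_E => <- <- <-; split; apply: c_0; rewrite !inE eqxx ?orbT.
Qed.

Lemma tau_combB a0 a1 a2 b0 b1 b2 :
  tau_comb a0 a1 a2 - tau_comb b0 b1 b2 = tau_comb (a0 - b0) (a1 - b1) (a2 - b2).
Proof. by apply/lfunP=> x; rewrite add_lfunE opp_lfunE !tau_combE; ring. Qed.

Lemma tau_comb_inj a0 a1 a2 b0 b1 b2 : tau_comb a0 a1 a2 = tau_comb b0 b1 b2 ->
  [/\ a0 = b0, a1 = b1 & a2 = b2].
Proof.
move/eqP; rewrite -subr_eq0 tau_combB => /eqP/tau_comb_eq0.
by case=> /subr0_eq-> /subr0_eq-> /subr0_eq->.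
Qed.

Lemma tau_comb_comp a0 a1 a2 b0 b1 b2 :
  (tau_comb b0 b1 b2 \o tau_comb a0 a1 a2)%VF =
  tau_comb (b0 * a0 + b1 * tau a2 + b2 * tau (tau a1))
           (b0 * a1 + b1 * tau a0 + b2 * tau (tau a2))
           (b0 * a2 + b1 * tau a1 + b2 * tau (tau a0)).
Proof.
apply/lfunP=> x; rewrite comp_lfunE !tau_combE !rmorphD !rmorphM /= !tau3K; ring.
Qed.

Definition tau_comb3 (a : L * L * L) : 'End(L) := tau_comb a.1.1 a.1.2 a.2.

Fact tau_comb3_is_linear : linear tau_comb3.
Proof.
move=> k [[a0 a1] a2] [[b0 b1] b2]; apply/lfunP=> x.
rewrite /tau_comb3 /= tau_combE add_lfunE scale_lfunE !tau_combE.
by rewrite !mulrDl -!scalerAl !scalerDr; ring.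
Qed.

HB.instance Definition _ := GRing.isSemilinear.Build F _ _ _ tau_comb3
  (GRing.semilinear_linear tau_comb3_is_linear).

Lemma tau_comb_surj (f : 'End(L)) : exists a0 a1 a2, f = tau_comb a0 a1 a2.
Proof.
have /lker0P/eqP ker0 : injective (linfun tau_comb3).
  by move=> [[a0 a1] a2] [[b0 b1] b2]; rewrite !lfunE => /tau_comb_inj[/= -> -> ->].
have dim_img := limg_ker_dim (linfun tau_comb3) fullv.
rewrite capfv ker0 dimv0 add0n in dim_img.
have img_full : limg (linfun tau_comb3) = fullv.
  apply/eqP; rewrite eqEdim subvf dim_img !dimvf /=.
  have dim_prod : dim (L * L * L)%type = (dim L + dim L + dim L)%N := erefl.
  have dim_End : dim 'End(L) = (dim L * dim L)%N := erefl.
  by rewrite dim_prod dim_End -dimvf dimL.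
have /memv_imgP[[[a0 a1] a2] _ ->] : f \in limg (linfun tau_comb3).
  by rewrite img_full memvf.
by exists a0, a1, a2; rewrite lfunE.
Qed.

(* Row [i] holds the coefficients of [tau ^ i \o tau_comb a0 a1 a2], cf. [tau_comb_comp]. *)
Definition tau_mx (a0 a1 a2 : L) : 'M[L]_3 :=
  \matrix_(i < 3, k < 3)
    match i : nat, k : nat with
    | 0, 0 => a0 | 0, 1 => a1 | 0, _ => a2
    | 1, 0 => tau a2 | 1, 1 => tau a0 | 1, _ => tau a1
    | _, 0 => tau (tau a1) | _, 1 => tau (tau a2) | _, _ => tau (tau a0)
    end.

Lemma det_tau_mx a0 a1 a2 :
  \det (tau_mx a0 a1 a2) = NK a0 + NK a1 + NK a2 - TK (a0 * tau a1 * tau (tau a2)).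
Proof.
rewrite (expand_det_row _ ord0) !big_ord_recl big_ord0 /cofactor.
rewrite !(expand_det_row _ ord0) !big_ord_recl !big_ord0 /cofactor.
rewrite !det_mx11 !mxE /bump /= !NK_tau TK_tau !rmorphM /= !tau3K !expr0 !expr1.
ring.
Qed.

Lemma isGl_tau_comb_det a0 a1 a2 : isGl (tau_comb a0 a1 a2) ->
  NK a0 + NK a1 + NK a2 - TK (a0 * tau a1 * tau (tau a2)) != 0.
Proof.
(* The coefficients of a left kernel vector give a tau_comb vanishing on the image of f. *)
move=> [h [fh _]]; rewrite -det_tau_mx; apply/negP=> /det0P[v /eqP v_neq0 vM].
have vMk k : (v *m tau_mx a0 a1 a2) 0 k = 0 by rewrite vM mxE.
move: (vMk 0) (vMk 1) (vMk 2); rewrite !mxE !big_ord_recl !big_ord0 !mxE /bump /=.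
rewrite !addr0 !addrA.
set c0 := v 0 ord0; set c1 := v 0 (lift ord0 ord0).
set c2 := v 0 (lift ord0 (lift ord0 ord0)) => e0 e1 e2.
have : tau_comb c0 c1 c2 = 0.
  apply/lfunP=> x; rewrite -(fh x) -comp_lfunE tau_comb_comp.
  by rewrite e0 e1 e2 tau_combE !mul0r !addr0 zero_lfunE.
case/tau_comb_eq0=> c0_0 c1_0 c2_0; apply: v_neq0; apply/matrixP=> i [[|[|[|j]]] j3] //.
- by rewrite (ord1 i) !mxE -c0_0; congr (v 0 _); apply: val_inj.
- by rewrite (ord1 i) !mxE -c1_0; congr (v 0 _); apply: val_inj.
- by rewrite (ord1 i) !mxE -c2_0; congr (v 0 _); apply: val_inj.
Qed.

Lemma gal_tau_comm (r : gal_of {:L}) x : r \in 'Gal({:L} / 1%VS)%g -> r (tau x) = tau (r x).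
Proof. by rewrite Gal_tau => /cycleP[i ->]; rewrite -!galM ?memvf // -expgS expgSr. Qed.

Lemma alg_iso_tau_comb_support a0 a1 a2 b0 b1 b2 (g g' : 'End(L)) :
    isGl (tau_comb a0 a1 a2) -> isGl g ->
    alg_iso (tau_comb a0 a1 a2) g (tau_comb b0 b1 b2) g' ->
  (a0 != 0, a1 != 0, a2 != 0) = (b0 != 0, b1 != 0, b2 != 0).
Proof.
move=> Gl_f Gl_g /(alg_iso_gal Gl_f Gl_g)[c [d [r [c_neq0 d_neq0 Gr crE]]]].
have rK z : r ((r^-1)%g z) = z by rewrite -galM ?memvf // mulVg gal_id.
have : tau_comb (c * r a0) (c * r a1) (c * r a2) =
       tau_comb (d * b0 * c) (d * b1 * tau c) (d * b2 * tau (tau c)).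
  apply/lfunP=> z; move: (crE ((r^-1)%g z)).
  rewrite !tau_combE !rmorphD !rmorphM /= !gal_tau_comm // rK => crz.
  transitivity (c * (r a0 * z + r a1 * tau z + r a2 * tau (tau z))); first by ring.
  by rewrite crz; ring.
case/tau_comb_inj=> e0 e1 e2.
have nz x : (c * r x != 0) = (x != 0) by rewrite mulf_eq0 negb_or c_neq0 fmorph_eq0.
rewrite -(nz a0) -(nz a1) -(nz a2) e0 e1 e2.
by rewrite !mulf_eq0 !negb_or !fmorph_eq0 c_neq0 d_neq0 !andbT.
Qed.

Definition nform_pattern (k : nat) : bool * bool * bool :=
  match k with
  | 1 => (true, true, true) | 2 => (true, false, true)
  | 3 => (true, true, false) | 4 => (true, false, false)
  | 5 => (false, true, true) | 6 => (false, false, true)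
  | 7 => (false, true, false) | _ => (false, false, false)
  end%N.

Lemma nform_pattern_inj i j : (1 <= i <= 7)%N -> (1 <= j <= 7)%N ->
  nform_pattern i = nform_pattern j -> i = j.
Proof. by case: i => [|[|[|[|[|[|[|[|i]]]]]]]]; case: j => [|[|[|[|[|[|[|[|j]]]]]]]]. Qed.

Lemma nform_tau_comb k (f : 'End(L)) : nform tau k f ->
  (1 <= k <= 7)%N /\ exists a0 a1 a2, f = tau_comb a0 a1 a2 /\
    (a0 != 0, a1 != 0, a2 != 0) = nform_pattern k.
Proof.
have tau_combP a0 a1 a2 : (forall x, f x = a0 * x + a1 * tau x + a2 * tau (tau x)) ->
    f = tau_comb a0 a1 a2.
  by move=> fE; apply/lfunP=> x; rewrite fE tau_combE.
case: k => [|[|[|[|[|[|[|[|k]]]]]]]] //= => [[y1 [y2]]|[y2]|[y1]|fE|[y1 [y2]]|[y2]|[y1]].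
- case=> y1_neq0 [y2_neq0 [_ fE]]; split=> //; exists 1, y1, y2.
  by rewrite oner_neq0 y1_neq0 y2_neq0 (tau_combP 1 y1 y2) // => x; rewrite fE mul1r.
- case=> y2_neq0 [_ fE]; split=> //; exists 1, 0, y2.
  by rewrite oner_neq0 eqxx y2_neq0 (tau_combP 1 0 y2) // => x; rewrite fE mul1r mul0r addr0.
- case=> y1_neq0 [_ fE]; split=> //; exists 1, y1, 0.
  by rewrite oner_neq0 eqxx y1_neq0 (tau_combP 1 y1 0) // => x; rewrite fE mul1r mul0r addr0.
- split=> //; exists 1, 0, 0.
  by rewrite oner_neq0 eqxx (tau_combP 1 0 0) // => x; rewrite fE mul1r !mul0r !addr0.
- case=> y1_neq0 [y2_neq0 [_ fE]]; split=> //; exists 0, y1, y2.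
  by rewrite eqxx y1_neq0 y2_neq0 (tau_combP 0 y1 y2) // => x; rewrite fE mul0r add0r.
- case=> y2_neq0 fE; split=> //; exists 0, 0, y2.
  by rewrite eqxx y2_neq0 (tau_combP 0 0 y2) // => x; rewrite fE !mul0r !add0r.
- case=> y1_neq0 fE; split=> //; exists 0, y1, 0.
  by rewrite eqxx y1_neq0 (tau_combP 0 y1 0) // => x; rewrite fE !mul0r add0r addr0.
Qed.

Lemma nform_uniq k k' (f : 'End(L)) : nform tau k f -> nform tau k' f -> k' = k.
Proof.
case/nform_tau_comb=> k_range [a0 [a1 [a2 [-> pat_a]]]].
case/nform_tau_comb=> k'_range [b0 [b1 [b2 [/tau_comb_inj[<- <- <-] pat_b]]]].
by apply: nform_pattern_inj => //; rewrite -pat_a -pat_b.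
Qed.

Lemma nform_tau_comb1 a1 a2 : isGl (tau_comb 1 a1 a2) ->
  exists2 k, (1 <= k <= 4)%N & nform tau k (tau_comb 1 a1 a2).
Proof.
move/isGl_tau_comb_det; rewrite mul1r.
have -> : NK (1 : L) = 1 by rewrite NK_tau !rmorph1 !mulr1.
have add1_eq0 x : (1 + x == 0) = (x == -1) by rewrite addrC addr_eq0.
rewrite -!addrA add1_eq0 addrA.
have NK0 : NK (0 : L) = 0 by rewrite NK_tau !mul0r.
have TK0 : TK (0 : L) = 0 by rewrite TK_tau !rmorph0 !addr0.
have [->|a1_neq0] := eqVneq a1 0; have [->|a2_neq0] := eqVneq a2 0; move=> det_neq0.
- by exists 4%N => // x; rewrite tau_combE mul1r !mul0r !addr0.
- exists 2%N => //; exists a2; do !split=> //.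
    by move: det_neq0; rewrite NK0 rmorph0 mul0r TK0 add0r subr0.
  by move=> x; rewrite tau_combE mul1r mul0r addr0.
- exists 3%N => //; exists a1; do !split=> //.
    by move: det_neq0; rewrite NK0 !rmorph0 mulr0 TK0 addr0 subr0.
  by move=> x; rewrite tau_combE mul1r mul0r addr0.
- exists 1%N => //; exists a1, a2; do !split=> //.
  by move=> x; rewrite tau_combE mul1r.
Qed.

Lemma nform_tau_comb0 a1 a2 : isGl (tau_comb 0 a1 a2) ->
  exists2 k, (5 <= k <= 7)%N & nform tau k (tau_comb 0 a1 a2).
Proof.
move=> Gl_f; move: (isGl_tau_comb_det Gl_f).
rewrite !mul0r NK_tau !mul0r add0r TK_tau !rmorph0 !addr0 subr0 addrC addr_eq0 => det_neq0.
have [a1_0|a1_neq0] := eqVneq a1 0; have [a2_0|a2_neq0] := eqVneq a2 0.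
- move: (isGl_eq0 1 Gl_f); rewrite tau_combE a1_0 a2_0 !mul0r !addr0.
  by rewrite eqxx oner_eq0.
- by exists 6%N => //; exists a2; split=> // x; rewrite tau_combE a1_0 !mul0r !add0r.
- by exists 7%N => //; exists a1; split=> // x; rewrite tau_combE a2_0 !mul0r add0r addr0.
- exists 5%N => //; exists a1, a2; do !split=> //.
  by move=> x; rewrite tau_combE mul0r add0r.
Qed.

Lemma amull_tau_comb c a0 a1 a2 :
  (amull c \o tau_comb a0 a1 a2)%VF = tau_comb (c * a0) (c * a1) (c * a2).
Proof. by apply/lfunP=> x; rewrite comp_lfunE lfunE /= !tau_combE !mulrDr !mulrA. Qed.

Lemma nform_exists (f g : 'End(L)) : isGl f -> isGl g ->
  exists f' g', [/\ isGl f', isGl g', alg_iso f g f' g'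
                 & exists2 k, (1 <= k <= 7)%N & nform tau k f'].
Proof.
have [a0 [a1 [a2 ->]]] := tau_comb_surj f; move=> Gl_f Gl_g.
have [a0_0|a0_neq0] := eqVneq a0 0.
  rewrite a0_0 in Gl_f *; have [k k_range nf] := nform_tau_comb0 Gl_f.
  by exists (tau_comb 0 a1 a2), g; split=> //; [exact: alg_iso_refl | exists k => //; lia].
have a0V_neq0 : a0^-1 != 0 by rewrite invr_eq0.
have := alg_iso_amull (tau_comb a0 a1 a2) g a0_neq0.
have := isGl_amull_comp a0V_neq0 Gl_f.
rewrite amull_tau_comb mulVf // => Gl_f' iso.
have [k k_range nf] := nform_tau_comb1 Gl_f'.
exists (tau_comb 1 (a0^-1 * a1) (a0^-1 * a2)), (amull a0 \o g)%VF; split=> //.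
  exact: isGl_amull_comp.
by exists k => //; lia.
Qed.

End CyclicCubic.

Theorem mainTheorem14 (F : fieldType) (L : splittingFieldType F)
    (hdim : \dim {:L} = 3%N) (hgal : galois 1%VS {:L})
    (tau : gal_of {:L}) (htau : ('Gal({:L} / 1%VS) = <[tau]>)%g) :
  (forall f g : 'End(L), isGl f -> isGl g ->
     exists f' g' : 'End(L), isGl f' /\ isGl g' /\ alg_iso f g f' g' /\
       exists k : nat, (1 <= k <= 7)%N /\ nform tau k f' /\
         (forall k', nform tau k' f' -> k' = k)) /\
  (forall (f' g' f'' g'' : 'End(L)) (i j : nat),
     isGl f' -> isGl g' -> isGl f'' -> isGl g'' ->
     nform tau i f' -> nform tau j f'' -> i <> j ->
     ~ alg_iso f' g' f'' g'').
Proof.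
split.
  move=> f g Gl_f Gl_g.
  have [f' [g' [Gl_f' Gl_g' iso [k k_range nf]]]] := nform_exists hdim hgal htau Gl_f Gl_g.
  exists f', g'; split=> //; split=> //; split=> //.
  by exists k; split=> //; split=> // k' /(nform_uniq hdim hgal htau nf).
move=> f' g' f'' g'' i j Gl_f' Gl_g' _ _.
case/nform_tau_comb=> i_range [a0 [a1 [a2 [f'E pat_a]]]].
case/nform_tau_comb=> j_range [b0 [b1 [b2 [f''E pat_b]]]] i_neq_j iso.
rewrite f'E f''E in Gl_f' iso.
apply: i_neq_j; apply: nform_pattern_inj => //.
by rewrite -pat_a -pat_b (alg_iso_tau_comb_support hdim hgal htau Gl_f' Gl_g' iso).
Qed.
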